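(* Assume every $f_i$ ($i=1,\dots,q$) is Lipschitz continuous with respect to the continuous variables, and consider the bound-constrained problem (PB): minimize $F(x)=(f_1(x),\dots,f_q(x))^\top$ subject to $x\in X\cap\mathcal Z$. If $x^\star\in X\cap\mathcal Z$ is Pareto-Clarke-Jahn stationary w.r.t. the continuous variables for (PB), then $x^\star$ is Pareto-Clarke stationary w.r.t. the continuous variables for (PB).
   Context: Fix integers $n,q\ge1$. Let $\{1,\dots,n\}=I^c\cup I^z$ with $I^c\cap I^z=\emptyset$ and $I^c,I^z\neq\emptyset$; for $x\in\mathbb R^n$ write $x_c=(x_i)_{i\in I^c}$, $x_z=(x_i)_{i\in I^z}$. Let $l,u\in\mathbb R^n$ with $l_i<u_i$, and $l_i,u_i\in\mathbb Z$ for $i\in I^z$. $X=\{x: l_i\le x_i\le u_i\ \forall i\}$, $\mathcal Z=\{x: x_i\in\mathbb Z\ \forall i\in I^z\}$. A function $h:\mathbb R^n\to\mathbb R$ is Lipschitz continuous with respect to the continuous variables if there is $L_h$ with $|h(x)-h(y)|\le L_h\|x-y\|$ whenever $x_i=y_i$ for all $i\in I^z$. For such $h$ and $s\in\mathbb R^n$ with $s_i=0$ ($i\in I^z$): $h^{Cl}_c(x;s)=\limsup_{y_c\to x_c,\ y_z=x_z,\ t\downarrow0}\frac{h(y+ts)-h(y)}{t}$, and $\partial_c h(x)=\{v\in\mathbb R^n: v_i=0\ \forall i\in I^z,\ h^{Cl}_c(x;s)\ge s^\top v\ \forall s \text{ with } s_i=0\ \forall i\in I^z\}$. For $x\in X\cap\mathcal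 Z$ and $d\in D^c(x)$, the Clarke-Jahn generalized directional derivative is $h^\circ_c(x;d)=\limsup\frac{h(y+td)-h(y)}{t}$, the limsup taken over $y_c\to x_c$, $y_z=x_z$, $y\in X\cap\mathcal Z$, $t\downarrow0$, $y+td\in X\cap\mathcal Z$. For $x\in X\cap\mathcal Z$, $D^c(x)=\{s\in\mathbb R^n: s_i=0\ (i\in I^z);\ s_i\ge 0\ (i\in I^c,\ x_i=l_i);\ s_i\le 0\ (i\in I^c,\ x_i=u_i);\ s_i\in\mathbb R\ (i\in I^c,\ l_i<x_i<u_i)\}$. A point $x^\star\in X\cap\mathcal Z$ is Pareto-Clarke-Jahn stationary w.r.t. the continuous variables for (PB) if for every $d\in D^c(x^\star)$ there is $j_d\in\{1,\dots,q\}$ with $(f_{j_d})^\circ_c(x^\star;d)\ge0$. It is Pareto-Clarke stationary w.r.t. the continuous variables for (PB) if there exist $\sigma\in\mathbb R^q$, $\sigma\ge0$ componentwise, $\sigma\ne0$, and $\bar\xi\in\sum_{i=1}^q\sigma_i\partial_c f_i(x^\star)$ (Minkowski sum) with $\bar\xi^\top d\ge0$ for all $d\in D^c(x^\star)$. *)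

From Stdlib Require Import Reals ZArith.
From Coquelicot Require Import Coquelicot.
From mathcomp Require Import ssreflect ssrfun ssrbool eqtype ssrnat seq fintype bigop.
Set Implicit Arguments. Unset Strict Implicit.

Open Scope R_scope.

Definition vec (n : nat) := 'I_n -> R.

Definition dot n (x y : vec n) : R := \big[Rplus/0]_(i < n) (x i * y i).
Definition vadd n (x y : vec n) : vec n := fun i => x i + y i.
Definition vsub n (x y : vec n) : vec n := fun i => x i - y i.
Definition vscale n (t : R) (x : vec n) : vec n := fun i => t * x i.
Definition norm2 n (x : vec n) : R := sqrt (dot x x).

(* The partition {1..n} = I^c ∪ I^z is encoded by isz : 'I_n -> bool,
   with I^z = {i | isz i} and I^c = {i | ~~ isz i}. *)

Definition zero_on_z n (isz : 'I_n -> bool) (s : vec n) : Prop :=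
  forall i, isz i -> s i = 0.

Definition same_z n (isz : 'I_n -> bool) (x y : vec n) : Prop :=
  forall i, isz i -> y i = x i.

Definition inX n (l u x : vec n) : Prop := forall i, l i <= x i <= u i.
Definition inZ n (isz : 'I_n -> bool) (x : vec n) : Prop :=
  forall i, isz i -> exists k : Z, x i = IZR k.

Definition lipschitz_c n (isz : 'I_n -> bool) (h : vec n -> R) : Prop :=
  exists Lh : R, forall x y : vec n, same_z isz x y ->
    Rabs (h x - h y) <= Lh * norm2 (vsub x y).

(* limsup of g(y,t) as y -> x (subject to the side condition P y t) and t ↓ 0:
   inf_{eps>0} sup { g y t | P y t, ||y - x|| < eps, 0 < t < eps } *)
Definition limsup_yt n (P : vec n -> R -> Prop) (x : vec n)
    (g : vec n -> R -> R) : Rbar :=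
  Rbar_glb (fun r => exists eps : R, 0 < eps /\
    r = Rbar_lub (fun s => exists (y : vec n) (t : R),
          P y t /\ norm2 (vsub y x) < eps /\ 0 < t < eps /\ s = Rbar.Finite (g y t))).

Definition clarke_c n (isz : 'I_n -> bool) (h : vec n -> R) (x s : vec n) : Rbar :=
  limsup_yt (fun y _ => same_z isz x y) x
            (fun y t => (h (vadd y (vscale t s)) - h y) / t).

Definition subdiff_c n (isz : 'I_n -> bool) (h : vec n -> R) (x v : vec n) : Prop :=
  zero_on_z isz v /\
  forall s : vec n, zero_on_z isz s ->
    Rbar_le (Rbar.Finite (dot s v)) (clarke_c isz h x s).

Definition clarke_jahn_c n (isz : 'I_n -> bool) (l u : vec n)
    (h : vec n -> R) (x d : vec n) : Rbar :=
  limsup_yt (fun y t => same_z isz x y /\ inX l u y /\ inZ isz y /\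
                        inX l u (vadd y (vscale t d)) /\
                        inZ isz (vadd y (vscale t d))) x
            (fun y t => (h (vadd y (vscale t d)) - h y) / t).

Definition Dc n (isz : 'I_n -> bool) (l u x s : vec n) : Prop :=
  forall i,
    (isz i -> s i = 0) /\
    (~~ isz i -> (x i = l i -> 0 <= s i) /\ (x i = u i -> s i <= 0)).

Definition pareto_clarke_jahn_stationary_c n q (isz : 'I_n -> bool)
    (l u : vec n) (f : 'I_q -> vec n -> R) (xs : vec n) : Prop :=
  forall d : vec n, Dc isz l u xs d ->
    exists j : 'I_q, Rbar_le (Rbar.Finite 0) (clarke_jahn_c isz l u (f j) xs d).

Definition pareto_clarke_stationary_c n q (isz : 'I_n -> bool)
    (l u : vec n) (f : 'I_q -> vec n -> R) (xs : vec n) : Prop :=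
  exists sigma : 'I_q -> R,
    (forall i, 0 <= sigma i) /\ (exists i, sigma i <> 0) /\
    exists (v : 'I_q -> vec n) (xi : vec n),
      (forall i, subdiff_c isz (f i) xs (v i)) /\
      (forall k, xi k = \big[Rplus/0]_(i < q) (sigma i * v i k)) /\
      (forall d : vec n, Dc isz l u xs d -> 0 <= dot xi d).

(** For a function that is Lipschitz in the continuous variables, the Clarke
    derivative [s |-> f°(x; s)] is a finite sublinear function of the continuous
    directions, and it dominates the Clarke-Jahn derivative.  Stationarity thus says
    that on the convex cone [D = D^c(x)] the pointwise maximum of the sublinear
    functions [g_j = f_j°(x; .)] is nonnegative.  A theorem of the alternative turns
    this into multipliers: Hahn-Banach applied to
    [z |-> inf_(d in D) max_j (g_j d + z_j)] yields [sigma >= 0], [sigma <> 0] with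
    [sum_j sigma_j g_j >= 0] on [D]; applied again to
    [(s_j)_j |-> inf_(d in D) sum_j sigma_j g_j (s_j + d)] it splits this sum into
    linear minorants [u_j <= sigma_j g_j] with [sum_j u_j >= 0] on [D].  Then
    [u_j / sigma_j], or any subgradient when [sigma_j = 0], lies in the Clarke
    subdifferential.  Hahn-Banach itself is proved in finite dimension by extending
    a dominated partial functional one coordinate at a time. *)

From Stdlib Require Import Reals ZArith Lra FunctionalExtensionality Classical IndefiniteDescription.
From Coquelicot Require Import Coquelicot.
From HB Require Import structures.
From mathcomp Require Import ssreflect ssrfun ssrbool eqtype ssrnat seq fintype bigop.
Open Scope R_scope.
Set Implicit Arguments. Unset Strict Implicit.

HB.instance Definition _ := Monoid.isComLaw.Build R 0 Rplus
  (fun a b c => esym (Rplus_assoc a b c)) Rplus_comm Rplus_0_l.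
HB.instance Definition _ := Monoid.isMulLaw.Build R 0 Rmult Rmult_0_l Rmult_0_r.
HB.instance Definition _ := Monoid.isAddLaw.Build R Rmult Rplus
  Rmult_plus_distr_r Rmult_plus_distr_l.

Ltac fext := apply: functional_extensionality => ?.

Lemma sumR_le (I : Type) (r : seq I) (P : pred I) (F G : I -> R) :
  (forall i, P i -> F i <= G i) ->
  \big[Rplus/0]_(i <- r | P i) F i <= \big[Rplus/0]_(i <- r | P i) G i.
Proof.
by move=> H; apply: (big_ind2 (fun a b => a <= b)); [lra | move=> *; lra | exact: H].
Qed.

Lemma sumR_ge0 (I : Type) (r : seq I) (P : pred I) (F : I -> R) :
  (forall i, P i -> 0 <= F i) -> 0 <= \big[Rplus/0]_(i <- r | P i) F i.
Proof. by move=> H; apply: (big_ind (fun a => 0 <= a)); [lra | move=> *; lra | exact: H]. Qed.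

Lemma sumR_opp (I : Type) (r : seq I) (P : pred I) (F : I -> R) :
  \big[Rplus/0]_(i <- r | P i) (- F i) = - \big[Rplus/0]_(i <- r | P i) F i.
Proof. by symmetry; apply: (big_morph Ropp Ropp_plus_distr Ropp_0). Qed.

Lemma sumR_term_le (I : finType) (F : I -> R) j :
  (forall i, 0 <= F i) -> F j <= \big[Rplus/0]_(i : I) F i.
Proof.
move=> H; rewrite (bigD1 j) //=.
have := @sumR_ge0 I (index_enum I) (fun i => i != j) F (fun i _ => H i); lra.
Qed.

Lemma Rabs_le_sum_Rabs q (z : 'I_q -> R) j : Rabs (z j) <= \big[Rplus/0]_(i < q) Rabs (z i).
Proof. by apply: (@sumR_term_le _ (fun i => Rabs (z i))) => i; apply: Rabs_pos. Qed.

Lemma Rle_of_lt_plus_scaled a b K :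
  0 < K -> (forall eta, 0 < eta -> a < b + K * eta) -> a <= b.
Proof.
move=> HK H; apply: Rle_plus_epsilon => e He.
have := H (e / K) (Rdiv_lt_0_compat _ _ He HK).
have -> : K * (e / K) = e by field; lra.
lra.
Qed.

Definition zvec n : vec n := fun _ => 0.
Arguments zvec : clear implicits.

Definition l1norm n (v : vec n) : R := \big[Rplus/0]_(i < n) Rabs (v i).

Lemma l1norm_ge0 n (v : vec n) : 0 <= l1norm v.
Proof. by apply: sumR_ge0 => i _; apply: Rabs_pos. Qed.

Lemma l1norm_scale n t (v : vec n) : 0 <= t -> l1norm (vscale t v) = t * l1norm v.
Proof.
move=> Ht; rewrite /l1norm big_distrr; apply: eq_bigr => i _.
by rewrite /vscale Rabs_mult Rabs_right //; lra.
Qed.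

Lemma norm2_ge0 n (v : vec n) : 0 <= norm2 v.
Proof. exact: sqrt_pos. Qed.

Lemma Rabs_le_norm2 n (v : vec n) i : Rabs (v i) <= norm2 v.
Proof.
rewrite /norm2 /dot -sqrt_Rsqr_abs; apply: sqrt_le_1_alt.
by apply: (@sumR_term_le _ (fun k => v k * v k)) => k; apply: Rle_0_sqr.
Qed.

Lemma norm2_le_l1norm n (v : vec n) : norm2 v <= l1norm v.
Proof.
have [Hsq H0] : dot v v <= l1norm v * l1norm v /\ 0 <= l1norm v.
  apply: (big_rec2 (fun a b => a <= b * b /\ 0 <= b)) => [|i a b _ [h1 h2]]; first lra.
  have h3 := Rabs_pos (v i).
  have h4 : v i * v i = Rabs (v i) * Rabs (v i) by rewrite -Rabs_mult Rabs_right //; nra.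
  split; nra.
by rewrite /norm2 -(sqrt_square (l1norm v)) //; apply: sqrt_le_1_alt.
Qed.

Lemma iter_Rplus_const (c : R) k : iter k (Rplus c) 0 = INR k * c.
Proof. by elim: k => [|k IH]; [rewrite /=; ring | rewrite S_INR /= IH; ring]. Qed.

Lemma l1norm_le_norm2 n (v : vec n) : l1norm v <= INR n * norm2 v.
Proof.
apply: Rle_trans (@sumR_le _ _ _ _ (fun _ => norm2 v) (fun i _ => Rabs_le_norm2 v i)) _.
by rewrite big_const_ord iter_Rplus_const; lra.
Qed.

Lemma norm2_vsub_diag n (x : vec n) : norm2 (vsub x x) = 0.
Proof.
apply: Rle_antisym (norm2_ge0 _); apply: Rle_trans (norm2_le_l1norm _) _.
by rewrite /l1norm big1 => [|i _]; [lra | rewrite /vsub Rminus_diag Rabs_R0].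
Qed.

Lemma norm2_shift_le n (x y s : vec n) t : 0 <= t ->
  norm2 (vsub (vadd y (vscale t s)) x) <= INR n * norm2 (vsub y x) + t * l1norm s.
Proof.
move=> Ht; apply: Rle_trans (norm2_le_l1norm _) _.
rewrite -l1norm_scale //.
apply: Rle_trans _ (Rplus_le_compat_r _ _ _ (l1norm_le_norm2 (vsub y x))).
rewrite /l1norm -big_split; apply: sumR_le => i _; rewrite /vsub /vadd /vscale.
have -> : y i + t * s i - x i = (y i - x i) + t * s i by ring.
exact: Rabs_triang.
Qed.

Lemma zero_on_z_zvec n (isz : 'I_n -> bool) : zero_on_z isz (zvec n).
Proof. by []. Qed.

Lemma zero_on_z_scale n (isz : 'I_n -> bool) t s :
  zero_on_z isz s -> zero_on_z isz (vscale t s).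
Proof. by move=> H i Hi; rewrite /vscale H // Rmult_0_r. Qed.

Lemma zero_on_z_add n (isz : 'I_n -> bool) s w :
  zero_on_z isz s -> zero_on_z isz w -> zero_on_z isz (vadd s w).
Proof. by move=> H1 H2 i Hi; rewrite /vadd H1 // H2 // Rplus_0_r. Qed.

Definition proj_c n (isz : 'I_n -> bool) (s : vec n) : vec n :=
  fun k => if isz k then 0 else s k.

Lemma zero_on_z_proj_c n (isz : 'I_n -> bool) s : zero_on_z isz (proj_c isz s).
Proof. by move=> i Hi; rewrite /proj_c Hi. Qed.

Lemma proj_c_id n (isz : 'I_n -> bool) s : zero_on_z isz s -> proj_c isz s = s.
Proof. by move=> Hs; fext; rewrite /proj_c; case: ifP => // /Hs ->. Qed.

Lemma proj_c_add n (isz : 'I_n -> bool) s w :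
  proj_c isz (vadd s w) = vadd (proj_c isz s) (proj_c isz w).
Proof. by fext; rewrite /proj_c /vadd; case: ifP => _; ring. Qed.

Lemma proj_c_scale n (isz : 'I_n -> bool) t s :
  proj_c isz (vscale t s) = vscale t (proj_c isz s).
Proof. by fext; rewrite /proj_c /vscale; case: ifP => _; ring. Qed.

Lemma dot_proj_c n (isz : 'I_n -> bool) s a :
  zero_on_z isz s -> dot s (proj_c isz a) = dot s a.
Proof.
by move=> Hs; apply: eq_bigr => k _; rewrite /proj_c; case: ifP => // /Hs ->; rewrite !Rmult_0_l.
Qed.

Lemma dot_scaler n (s w : vec n) c : dot s (vscale c w) = c * dot s w.
Proof. by rewrite /dot big_distrr; apply: eq_bigr => k _; rewrite /vscale /=; ring. Qed.

Lemma dot_oppl n (s w : vec n) : dot (vscale (-1) s) w = - dot s w.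
Proof. by rewrite /dot -sumR_opp; apply: eq_bigr => k _; rewrite /vscale; ring. Qed.

(** * Hahn-Banach in finite dimension *)

Section HahnBanach.
Variable I : finType.
Implicit Types (P : (I -> R) -> R) (G : (I -> R) -> R -> Prop) (a v w x z : I -> R).

Definition fdot a z := \big[Rplus/0]_(i : I) (a i * z i).

Definition sublinear P :=
  (forall v w, P (fun i => v i + w i) <= P v + P w) /\
  (forall t v, 0 < t -> P (fun i => t * v i) = t * P v).

(* A partial linear functional is given by its graph: [G v r] means that it maps [v] to [r]. *)
Definition dominated_linear_graph P G :=
  [/\ G (fun _ => 0) 0,
      (forall v r w s, G v r -> G w s -> G (fun i => v i + w i) (r + s)),
      (forall v r t, G v r -> G (fun i => t * v i) (t * r)),
      (forall r, G (fun _ => 0) r -> r = 0) &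
      (forall v r, G v r -> r <= P v)].

Lemma pos_homogeneous_of_le P :
  (forall t v, 0 < t -> P (fun i => t * v i) <= t * P v) ->
  forall t v, 0 < t -> P (fun i => t * v i) = t * P v.
Proof.
move=> H t v Ht; apply: Rle_antisym; first exact: H.
have := H (/ t) (fun i => t * v i) (Rinv_0_lt_compat _ Ht).
have -> : (fun i => / t * (t * v i)) = v by fext; field; lra.
move/(Rmult_le_compat_l t _ _ (Rlt_le _ _ Ht)).
by have -> : t * (/ t * P (fun i => t * v i)) = P (fun i => t * v i) by field; lra.
Qed.

Lemma sublinear_zero P : sublinear P -> P (fun _ => 0) = 0.
Proof.
case=> _ Phom; have := Phom 2 (fun _ => 0) Rlt_0_2.
have -> : (fun _ : I => 2 * 0) = (fun _ => 0) by fext; ring.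
lra.
Qed.

(* The one-step extension to [x] can take any value [c] between these bounds. *)
Lemma dominated_graph_gap P G x :
  sublinear P -> dominated_linear_graph P G ->
  exists c, (forall v r, G v r -> r - P (fun i => v i - x i) <= c) /\
            (forall w s, G w s -> c <= P (fun i => w i + x i) - s).
Proof.
move=> [Psub _] [G0 Gadd _ _ Gdom].
pose A r' := exists v r, G v r /\ r' = r - P (fun i => v i - x i).
have key v r w s : G v r -> G w s ->
    r - P (fun i => v i - x i) <= P (fun i => w i + x i) - s.
  move=> Hv Hw; have := Gdom _ _ (Gadd _ _ _ _ Hv Hw).
  have -> : (fun i => v i + w i) = (fun i => (v i - x i) + (w i + x i)) by fext; ring.
  have := Psub (fun i => v i - x i) (fun i => w i + x i); lra.
have [c [Hub Hlub]] : {m | is_lub A m}.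
  apply: completeness.
    exists (P (fun i => 0 + x i) - 0) => r' [v [r [Hv ->]]]; exact: key Hv G0.
  by exists (0 - P (fun i => 0 - x i)), (fun _ => 0), 0.
exists c; split; first by move=> v r Hv; apply: Hub; exists v, r.
by move=> w s Hw; apply: Hlub => r' [v [r [Hv ->]]]; exact: key Hv Hw.
Qed.

Definition graph_extend G x c : (I -> R) -> R -> Prop := fun y rho =>
  exists v r t, G v r /\ y = (fun i => v i + t * x i) /\ rho = r + t * c.

Lemma graph_extend_dominated P G x c :
  sublinear P -> dominated_linear_graph P G -> ~ (exists c', G x c') ->
  (forall v r, G v r -> r - P (fun i => v i - x i) <= c) ->
  (forall w s, G w s -> c <= P (fun i => w i + x i) - s) ->
  dominated_linear_graph P (graph_extend G x c).
Proof.
move=> [_ Phom] [G0 Gadd Gsc Gfun Gdom] Hx Hlo Hhi; split.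
- by exists (fun _ => 0), 0, 0; split => //; split; [fext; ring | ring].
- move=> ? ? ? ? [v1 [r1 [t1 [H1 [-> ->]]]]] [v2 [r2 [t2 [H2 [-> ->]]]]].
  exists (fun i => v1 i + v2 i), (r1 + r2), (t1 + t2); split; first exact: Gadd.
  by split; [fext; ring | ring].
- move=> ? ? tau [v1 [r1 [t1 [H1 [-> ->]]]]].
  exists (fun i => tau * v1 i), (tau * r1), (tau * t1); split; first exact: Gsc.
  by split; [fext; ring | ring].
- move=> rho [v [r [t [Hv [Heq ->]]]]].
  have Hcoord i : 0 = v i + t * x i by have := f_equal (fun g => g i) Heq.
  case: (Req_dec t 0) => [Ht | Ht].
    subst t; have Hv0 : v = (fun _ => 0).
      by apply: functional_extensionality => i; have := Hcoord i; lra.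
    by subst v; rewrite (Gfun _ Hv); ring.
  exfalso; apply: Hx; exists ((-1 / t) * r).
  have -> : x = (fun i => (-1 / t) * v i).
    apply: functional_extensionality => i; have := Hcoord i.
    move=> E; have -> : v i = - (t * x i) by lra.
    by field.
  exact: Gsc.
- move=> ? ? [v [r [t [Hv [-> ->]]]]].
  case: (Rtotal_order t 0) => [Ht | [Ht | Ht]].
  + have := Hlo _ _ (Gsc _ _ (/ - t) Hv).
    have -> : (fun i => v i + t * x i) = (fun i => - t * ((/ - t * v i) - x i)).
      by fext; field; lra.
    rewrite Phom; last lra.
    move/(Rmult_le_compat_l (- t) _ _ ltac:(lra)).
    have -> : - t * (/ - t * r - P (fun i => / - t * v i - x i)) =
              r - (- t) * P (fun i => / - t * v i - x i) by field; lra.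
    lra.
  + subst t; have -> : (fun i => v i + 0 * x i) = v by fext; ring.
    have := Gdom _ _ Hv; lra.
  + have := Hhi _ _ (Gsc _ _ (/ t) Hv).
    have -> : (fun i => v i + t * x i) = (fun i => t * ((/ t * v i) + x i)).
      by fext; field; lra.
    rewrite Phom //.
    move/(Rmult_le_compat_l t _ _ (Rlt_le _ _ Ht)).
    have -> : t * (P (fun i => / t * v i + x i) - / t * r) =
              t * P (fun i => / t * v i + x i) - r by field; lra.
    lra.
Qed.

Lemma dominated_graph_extend P G x :
  sublinear P -> dominated_linear_graph P G ->
  exists G', [/\ dominated_linear_graph P G', (forall v r, G v r -> G' v r) &
                 exists c, G' x c].
Proof.
move=> HP HG; case: (classic (exists c, G x c)) => [Hx | Hx]; first by exists G.
have [c [Hlo Hhi]] := dominated_graph_gap x HP HG.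
exists (graph_extend G x c); split; first exact: graph_extend_dominated.
  by move=> v r Hv; exists v, r, 0; split => //; split; [fext; ring | ring].
by exists c, (fun _ => 0), 0, 1; case: HG => *; split => //; split; [fext; ring | ring].
Qed.

Theorem hahn_banach P G :
  sublinear P -> dominated_linear_graph P G ->
  exists a, (forall z, fdot a z <= P z) /\ (forall v r, G v r -> fdot a v = r).
Proof.
move=> HP HG.
pose e (i : I) : I -> R := fun j => if j == i then 1 else 0.
have Hl (l : seq I) : exists G', [/\ dominated_linear_graph P G',
    (forall v r, G v r -> G' v r) & forall i, i \in l -> exists c, G' (e i) c].
  elim: l => [|i l [G1 [HG1 H1 Hl]]]; first by exists G.
  have [G2 [HG2 H12 [c Hc]]] := dominated_graph_extend (e i) HP HG1.
  exists G2; split => //; first by move=> v r /H1 /H12.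
  move=> j; rewrite in_cons => /orP [/eqP -> | Hj]; first by exists c.
  by have [c' Hc'] := Hl j Hj; exists c'; apply: H12.
have [G' [[G0 Gadd Gsc Gfun Gdom] HGG' Hall]] := Hl (enum I).
have [c Hc] : exists c : I -> R, forall i, G' (e i) (c i).
  by apply: (functional_choice (fun i => G' (e i))) => i; apply: Hall; rewrite mem_enum.
have Hsum z (l : seq I) : G' (fun j => \big[Rplus/0]_(i <- l) (z i * e i j))
                             (\big[Rplus/0]_(i <- l) (c i * z i)).
  elim: l => [|i l IH].
    by rewrite big_nil; have -> : (fun j => \big[Rplus/0]_(i <- [::]) (z i * e i j)) =
                                  (fun _ => 0) by fext; rewrite big_nil.
  have -> : (fun j => \big[Rplus/0]_(k <- i :: l) (z k * e k j)) =
            (fun j => z i * e i j + \big[Rplus/0]_(k <- l) (z k * e k j)).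
    by fext; rewrite big_cons.
  by rewrite big_cons; apply: Gadd => //; rewrite Rmult_comm; apply: Gsc.
have Hz z : G' z (fdot c z).
  have := Hsum z (index_enum I).
  have -> // : (fun j => \big[Rplus/0]_(i <- index_enum I) (z i * e i j)) = z.
  apply: functional_extensionality => j.
  rewrite (bigD1 j) //= /e eqxx big1 => [|i Hi]; first ring.
  by rewrite eq_sym (negbTE Hi); ring.
exists c; split; first by move=> z; apply: Gdom.
move=> v r Hv; have := Gadd _ _ _ _ (HGG' _ _ Hv) (Gsc _ _ (-1) (Hz v)).
have -> : (fun i => v i + -1 * v i) = (fun _ => 0) by fext; ring.
move/Gfun; lra.
Qed.

Corollary sublinear_linear_minorant P :
  sublinear P -> exists a, forall z, fdot a z <= P z.
Proof.
move=> HP; pose G v r := v = (fun _ => 0) /\ r = 0.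
have HG : dominated_linear_graph P G.
  split => [//| v r w s [-> ->] [-> ->] | v r t [-> ->] | r [_ ->] | v r [-> ->]].
  - by split; [fext | ]; ring.
  - by split; [fext | ]; ring.
  - by [].
  - by rewrite sublinear_zero //; lra.
by have [a [Ha _]] := hahn_banach HP HG; exists a.
Qed.

End HahnBanach.

(** * Infimal projections *)

Definition Rinf (T : R -> Prop) : R := real (Glb_Rbar T).

Lemma Rinf_spec (T : R -> Prop) b r0 : T r0 -> (forall r, T r -> b <= r) ->
  (forall r, T r -> Rinf T <= r) /\ (forall c, (forall r, T r -> c <= r) -> c <= Rinf T).
Proof.
move=> H0 Hb; have [Hlb Hglb] := Glb_Rbar_correct T.
have E : Glb_Rbar T = Rbar.Finite (Rinf T).
  by move: (Hlb r0 H0) (Hglb b Hb); rewrite /Rinf; case: (Glb_Rbar T).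
split; first by move=> r Hr; have := Hlb r Hr; rewrite E.
by move=> c Hc; have := Hglb (Rbar.Finite c) Hc; rewrite E.
Qed.

Section InfimalProjection.
Variables (n : nat) (I : finType) (D : vec n -> Prop).
Variable Phi : (I -> R) -> vec n -> R -> Prop.
Hypothesis D_add : forall d1 d2, D d1 -> D d2 -> D (vadd d1 d2).
Hypothesis D_scale : forall t d, 0 < t -> D d -> D (vscale t d).
Hypothesis Phi_add : forall z d r z' d' r', D d -> D d' -> Phi z d r -> Phi z' d' r' ->
  Phi (fun i => z i + z' i) (vadd d d') (r + r').
Hypothesis Phi_scale : forall t z d r, 0 < t -> D d -> Phi z d r ->
  Phi (fun i => t * z i) (vscale t d) (t * r).
Hypothesis Phi_feasible : forall z, exists d r, D d /\ Phi z d r.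
Hypothesis Phi_bounded : forall z, exists b, forall d r, D d -> Phi z d r -> b <= r.

(* [Phi z d r] says that a jointly sublinear function of [(z, d)] is at most [r]
   there; [infproj] minimises that function over the cone [D]. *)
Definition infproj z := Rinf (fun r => exists d, D d /\ Phi z d r).

Let infproj_spec z :
  (forall r, (exists d, D d /\ Phi z d r) -> infproj z <= r) /\
  (forall c, (forall r, (exists d, D d /\ Phi z d r) -> c <= r) -> c <= infproj z).
Proof.
have [d [r0 [Hd H0]]] := Phi_feasible z; have [b Hb] := Phi_bounded z.
by apply: (@Rinf_spec _ b r0); [exists d | move=> r [d' [Hd' /Hb]]; apply].
Qed.

Lemma infproj_le z d r : D d -> Phi z d r -> infproj z <= r.
Proof. by move=> Hd Hr; apply: (proj1 (infproj_spec z)); exists d. Qed.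

Lemma le_infproj z c : (forall d r, D d -> Phi z d r -> c <= r) -> c <= infproj z.
Proof. by move=> H; apply: (proj2 (infproj_spec z)) => r [d [Hd /H]]; apply. Qed.

Lemma infproj_sublinear : sublinear infproj.
Proof.
split.
- move=> z w.
  suff : infproj (fun i => z i + w i) - infproj w <= infproj z by lra.
  apply: le_infproj => d r Hd Hr.
  suff : infproj (fun i => z i + w i) - r <= infproj w by lra.
  apply: le_infproj => d' r' Hd' Hr'.
  have := infproj_le (D_add Hd Hd') (Phi_add Hd Hd' Hr Hr'); lra.
- apply: pos_homogeneous_of_le => t z Ht.
  suff : infproj (fun i => t * z i) / t <= infproj z.
    move/(Rmult_le_compat_l t _ _ (Rlt_le _ _ Ht)).
    by have -> : t * (infproj (fun i => t * z i) / t) = infproj (fun i => t * z i)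
      by field; lra.
  apply: le_infproj => d r Hd Hr.
  have := infproj_le (D_scale Ht Hd) (Phi_scale Ht Hd Hr).
  move/(Rmult_le_compat_r (/ t) _ _ (Rlt_le _ _ (Rinv_0_lt_compat _ Ht))).
  by have -> : t * r * / t = r by field; lra.
Qed.

End InfimalProjection.

(** * A theorem of the alternative for sublinear functions on a cone *)

Definition row_c n q (isz : 'I_n -> bool) (s : 'I_q * 'I_n -> R) (j : 'I_q) : vec n :=
  proj_c isz (fun k => s (j, k)).

Lemma row_c_add n q (isz : 'I_n -> bool) (s w : 'I_q * 'I_n -> R) j :
  row_c isz (fun p => s p + w p) j = vadd (row_c isz s j) (row_c isz w j).
Proof. by fext; rewrite /row_c /proj_c /vadd; case: ifP => _; ring. Qed.

Lemma row_c_scale n q (isz : 'I_n -> bool) t (s : 'I_q * 'I_n -> R) j :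
  row_c isz (fun p => t * s p) j = vscale t (row_c isz s j).
Proof. by fext; rewrite /row_c /proj_c /vscale; case: ifP => _; ring. Qed.

Lemma fdot_pair n q (b s : 'I_q * 'I_n -> R) :
  fdot b s = \big[Rplus/0]_(j < q) \big[Rplus/0]_(k < n) (b (j, k) * s (j, k)).
Proof. by rewrite /fdot (pair_bigA _ (fun j k => b (j, k) * s (j, k))); apply: eq_bigr => -[]. Qed.

Section Alternative.
Variables (n q : nat) (isz : 'I_n -> bool) (D : vec n -> Prop).
Variable g : 'I_q -> vec n -> R.
Hypothesis D_zero_on_z : forall d, D d -> zero_on_z isz d.
Hypothesis D_zvec : D (zvec n).
Hypothesis D_add : forall d1 d2, D d1 -> D d2 -> D (vadd d1 d2).
Hypothesis D_scale : forall t d, 0 < t -> D d -> D (vscale t d).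
Hypothesis g_add : forall j s w, zero_on_z isz s -> zero_on_z isz w ->
  g j (vadd s w) <= g j s + g j w.
Hypothesis g_scale : forall j t s, 0 < t -> zero_on_z isz s ->
  g j (vscale t s) = t * g j s.
Hypothesis g_max_ge0 : forall d, D d -> exists j, 0 <= g j d.

Lemma g_zvec j : g j (zvec n) = 0.
Proof.
have := g_scale j Rlt_0_2 (@zero_on_z_zvec _ isz).
have -> : vscale 2 (zvec n) = zvec n by fext; rewrite /vscale /zvec; ring.
lra.
Qed.

Lemma subgradient_exists j :
  exists v, zero_on_z isz v /\ forall s, zero_on_z isz s -> dot s v <= g j s.
Proof.
have HP : sublinear (fun s : vec n => g j (proj_c isz s)).
  split => [s w | t s Ht].
  - by rewrite (proj_c_add isz s w); apply: g_add; apply: zero_on_z_proj_c.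
  - by rewrite (proj_c_scale isz t s); apply: g_scale => //; apply: zero_on_z_proj_c.
have [a Ha] := sublinear_linear_minorant HP.
exists (proj_c isz a); split => [|s Hs]; first exact: zero_on_z_proj_c.
rewrite dot_proj_c //; have := Ha s; rewrite proj_c_id //.
suff -> : dot s a = fdot a s by [].
by apply: eq_bigr => k _; apply: Rmult_comm.
Qed.

(* Hahn-Banach for [z |-> inf_(d in D) max_j (g j d + z j)]; extending the
   functional [(al, ..., al) |-> al] from the constants normalises [a] to sum 1. *)
Lemma max_linear_minorant : (0 < q)%N ->
  exists a : 'I_q -> R, fdot a (fun _ => 1) = 1 /\
    forall z d r, D d -> (forall j, g j d + z j <= r) -> fdot a z <= r.
Proof.
move=> Hq.
pose Phi (z : 'I_q -> R) d r := forall j, g j d + z j <= r.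
have Hadd z d r z' d' r' : D d -> D d' -> Phi z d r -> Phi z' d' r' ->
    Phi (fun i => z i + z' i) (vadd d d') (r + r').
  move=> Hd Hd' Hr Hr' j.
  have := g_add j (D_zero_on_z Hd) (D_zero_on_z Hd'); have := Hr j; have := Hr' j; lra.
have Hscale t z d r : 0 < t -> D d -> Phi z d r ->
    Phi (fun i => t * z i) (vscale t d) (t * r).
  move=> Ht Hd Hr j; rewrite g_scale //; last exact: D_zero_on_z.
  have := Rmult_le_compat_l t _ _ (Rlt_le _ _ Ht) (Hr j); lra.
have Hfeas z : exists d r, D d /\ Phi z d r.
  exists (zvec n), (\big[Rplus/0]_(i < q) Rabs (z i)); split => // j; rewrite g_zvec.
  have := Rabs_le_sum_Rabs z j; have := Rle_abs (z j); lra.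
have Hbnd z : exists b, forall d r, D d -> Phi z d r -> b <= r.
  exists (- \big[Rplus/0]_(i < q) Rabs (z i)) => d r Hd Hr.
  have [j Hj] := g_max_ge0 Hd; have := Hr j; have := Rabs_le_sum_Rabs z j.
  have := Rle_abs (- z j); rewrite Rabs_Ropp; lra.
pose P := infproj D Phi.
pose G (v : 'I_q -> R) r := exists al, v = (fun _ => al) /\ r = al.
have HG : dominated_linear_graph P G.
  split.
  - by exists 0.
  - by move=> v r w s [a1 [-> ->]] [a2 [-> ->]]; exists (a1 + a2).
  - by move=> v r t [a1 [-> ->]]; exists (t * a1).
  - by move=> r [al [E ->]]; have := f_equal (fun h => h (Ordinal Hq)) E.
  - move=> v r [al [-> ->]]; apply: (le_infproj Hfeas Hbnd) => d r0 Hd Hr.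
    by have [j Hj] := g_max_ge0 Hd; have := Hr j; lra.
have [a [Ha1 Ha2]] :=
  hahn_banach (infproj_sublinear D_add D_scale Hadd Hscale Hfeas Hbnd) HG.
exists a; split; first by apply: Ha2; exists 1.
move=> z d r Hd Hr; apply: Rle_trans (Ha1 z) _; exact: infproj_le Hd Hr.
Qed.

Lemma sum_multiplied_ge0 : (0 < q)%N ->
  exists sigma : 'I_q -> R, [/\ forall j, 0 <= sigma j, exists j, sigma j <> 0 &
    forall d, D d -> 0 <= \big[Rplus/0]_(j < q) (sigma j * g j d)].
Proof.
move=> Hq; have [a [Ha1 Ha]] := max_linear_minorant Hq.
exists a; split.
- move=> k; pose z : 'I_q -> R := fun j => if j == k then -1 else 0.
  have : fdot a z = - a k.
    rewrite /fdot (bigD1 k) //= /z eqxx big1 => [|i Hi]; last by rewrite (negbTE Hi); ring.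
    ring.
  have Hz j : g j (zvec n) + z j <= 0 by rewrite g_zvec /z; case: (j == k); lra.
  have := Ha z _ _ D_zvec Hz; lra.
- apply: NNPP => Hn; move: Ha1; rewrite /fdot big1 => [|i _]; first lra.
  have -> : a i = 0 by apply: NNPP => Hi; apply: Hn; exists i.
  ring.
- move=> d Hd; have := Ha (fun j => - g j d) d 0 Hd (fun j => Req_le _ _ (Rplus_opp_r _)).
  have -> : fdot a (fun j => - g j d) = - \big[Rplus/0]_(j < q) (a j * g j d).
    by rewrite -sumR_opp; apply: eq_bigr => j _; ring.
  lra.
Qed.

(* Hahn-Banach for [s |-> inf_(d in D) sum_j sigma_j g_j (s_j + d)], where a
   point [s] of [(R^n)^q] has rows [row_c isz s j]. *)
Lemma weighted_sum_linear_minorant (sigma : 'I_q -> R) :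
  (forall j, 0 <= sigma j) ->
  (forall d, D d -> 0 <= \big[Rplus/0]_(j < q) (sigma j * g j d)) ->
  exists b : 'I_q * 'I_n -> R, forall s d, D d ->
    fdot b s <= \big[Rplus/0]_(j < q) (sigma j * g j (vadd (row_c isz s j) d)).
Proof.
move=> Hsig Hsum.
have Hrow (s : 'I_q * 'I_n -> R) j : zero_on_z isz (row_c isz s j) :=
  zero_on_z_proj_c _.
pose Phi (s : 'I_q * 'I_n -> R) d r :=
  \big[Rplus/0]_(j < q) (sigma j * g j (vadd (row_c isz s j) d)) <= r.
have Hadd s d r s' d' r' : D d -> D d' -> Phi s d r -> Phi s' d' r' ->
    Phi (fun p => s p + s' p) (vadd d d') (r + r').
  move=> Hd Hd' Hr Hr'; apply: Rle_trans _ (Rplus_le_compat _ _ _ _ Hr Hr').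
  rewrite -big_split; apply: sumR_le => j _.
  have -> : vadd (row_c isz (fun p => s p + s' p) j) (vadd d d') =
            vadd (vadd (row_c isz s j) d) (vadd (row_c isz s' j) d').
    by rewrite row_c_add; fext; rewrite /vadd; ring.
  have := g_add j (zero_on_z_add (Hrow s j) (D_zero_on_z Hd))
                  (zero_on_z_add (Hrow s' j) (D_zero_on_z Hd')).
  move/(Rmult_le_compat_l _ _ _ (Hsig j)); rewrite /=; lra.
have Hscale t s d r : 0 < t -> D d -> Phi s d r ->
    Phi (fun p => t * s p) (vscale t d) (t * r).
  move=> Ht Hd Hr; apply: Rle_trans _ (Rmult_le_compat_l _ _ _ (Rlt_le _ _ Ht) Hr).
  rewrite big_distrr; apply: Req_le; apply: eq_bigr => j _.
  have -> : vadd (row_c isz (fun p => t * s p) j) (vscale t d) =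
            vscale t (vadd (row_c isz s j) d).
    by rewrite row_c_scale; fext; rewrite /vadd /vscale; ring.
  by rewrite g_scale //= ; [ring | exact: zero_on_z_add (Hrow s j) (D_zero_on_z Hd)].
have Hfeas s : exists d r, D d /\ Phi s d r.
  exists (zvec n), (\big[Rplus/0]_(j < q) (sigma j * g j (vadd (row_c isz s j) (zvec n)))).
  by split => //; apply: Rle_refl.
(* [g j d <= g j (row + d) + g j (- row)], weighted and summed. *)
have Hbnd s : exists b, forall d r, D d -> Phi s d r -> b <= r.
  exists (- \big[Rplus/0]_(j < q) (sigma j * g j (vscale (-1) (row_c isz s j)))).
  move=> d r Hd Hr; rewrite /Phi in Hr; have := Hsum d Hd.
  suff : \big[Rplus/0]_(j < q) (sigma j * g j d) <=
    \big[Rplus/0]_(j < q) (sigma j * g j (vadd (row_c isz s j) d)) +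
    \big[Rplus/0]_(j < q) (sigma j * g j (vscale (-1) (row_c isz s j))) by lra.
  rewrite -big_split; apply: sumR_le => j _.
  have Ed : d = vadd (vadd (row_c isz s j) d) (vscale (-1) (row_c isz s j)).
    by fext; rewrite /vadd /vscale; ring.
  have := g_add j (zero_on_z_add (Hrow s j) (D_zero_on_z Hd))
                  (zero_on_z_scale (-1) (Hrow s j)).
  rewrite -Ed; move/(Rmult_le_compat_l _ _ _ (Hsig j)); rewrite /=; lra.
have [b Hb] := sublinear_linear_minorant
  (infproj_sublinear D_add D_scale Hadd Hscale Hfeas Hbnd).
exists b => s d Hd; apply: Rle_trans (Hb s) _.
by apply: (infproj_le Hfeas Hbnd Hd); apply: Rle_refl.
Qed.

Lemma split_multiplied_sum (sigma : 'I_q -> R) :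
  (forall j, 0 <= sigma j) ->
  (forall d, D d -> 0 <= \big[Rplus/0]_(j < q) (sigma j * g j d)) ->
  exists u : 'I_q -> vec n, [/\ forall j, zero_on_z isz (u j),
    forall j s, zero_on_z isz s -> dot s (u j) <= sigma j * g j s &
    forall d, D d -> 0 <= \big[Rplus/0]_(j < q) dot d (u j)].
Proof.
move=> Hsig Hsum; have [b Hb] := weighted_sum_linear_minorant Hsig Hsum.
exists (row_c isz b); split => [j | j0 s Hs | d Hd]; first exact: zero_on_z_proj_c.
- pose s' (p : 'I_q * 'I_n) := if p.1 == j0 then s p.2 else 0.
  have Hrows j : vadd (row_c isz s' j) (zvec n) = if j == j0 then s else zvec n.
    fext; rewrite /vadd /row_c /proj_c /s' /zvec /=; case: (j == j0).
      by case: ifP => [/Hs -> | _]; ring.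
    by case: ifP => _; ring.
  have <- : fdot b s' = dot s (row_c isz b j0).
    rewrite fdot_pair dot_proj_c // (bigD1 j0) //= [X in _ + X]big1 => [|j Hj].
      by rewrite Rplus_0_r; apply: eq_bigr => k _; rewrite /s' /= eqxx Rmult_comm.
    by apply: big1 => k _; rewrite /s' /= (negbTE Hj) Rmult_0_r.
  apply: Rle_trans (Hb s' _ D_zvec) _.
  rewrite (bigD1 j0) //= big1 => [|j Hj]; first by rewrite Hrows eqxx; lra.
  by rewrite Hrows (negbTE Hj) g_zvec Rmult_0_r.
- pose s' (p : 'I_q * 'I_n) := - d p.2.
  have Hrows j : vadd (row_c isz s' j) d = zvec n.
    fext; rewrite /vadd /row_c /proj_c /s' /zvec /=.
    by case: ifP => [/(D_zero_on_z Hd) -> | _]; ring.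
  have : fdot b s' = - \big[Rplus/0]_(j < q) dot d (row_c isz b j).
    rewrite fdot_pair -sumR_opp; apply: eq_bigr => j _.
    rewrite dot_proj_c; last exact: D_zero_on_z.
    by rewrite /dot -sumR_opp; apply: eq_bigr => k _; rewrite /s' /=; ring.
  have := Hb s' d Hd; rewrite big1 => [|j _]; last by rewrite Hrows g_zvec Rmult_0_r.
  lra.
Qed.

Lemma unscale_subgradient j c w : 0 <= c ->
  (forall s, zero_on_z isz s -> dot s w <= c * g j s) ->
  exists v, [/\ zero_on_z isz v, forall s, zero_on_z isz s -> dot s v <= g j s &
                forall d, zero_on_z isz d -> c * dot d v = dot d w].
Proof.
move=> Hc Hw; case: (Rle_lt_or_eq_dec _ _ Hc) => [Hpos | Hzero].
- exists (proj_c isz (vscale (/ c) w)); split => [|s Hs | d Hd].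
  + exact: zero_on_z_proj_c.
  + rewrite dot_proj_c // dot_scaler.
    have := Rmult_le_compat_l _ _ _ (Rlt_le _ _ (Rinv_0_lt_compat _ Hpos)) (Hw s Hs).
    by have -> : / c * (c * g j s) = g j s by field; lra.
  + by rewrite dot_proj_c // dot_scaler; field; lra.
- have [v [Hv0 Hv]] := subgradient_exists j.
  exists v; split => // d Hd; rewrite -Hzero Rmult_0_l.
  (* A linear minorant of [0 * g j] vanishes. *)
  have := Hw d Hd; have := Hw _ (zero_on_z_scale (-1) Hd).
  by rewrite dot_oppl -Hzero; lra.
Qed.

Theorem sublinear_alternative : (0 < q)%N ->
  exists sigma : 'I_q -> R, [/\ forall j, 0 <= sigma j, exists j, sigma j <> 0 &
    exists v : 'I_q -> vec n,
      (forall j, zero_on_z isz (v j) /\ forall s, zero_on_z isz s -> dot s (v j) <= g j s) /\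
      forall d, D d -> 0 <= dot (fun k => \big[Rplus/0]_(j < q) (sigma j * v j k)) d].
Proof.
move=> Hq; have [sigma [Hsig Hnz Hsum]] := sum_multiplied_ge0 Hq.
have [u [_ Hu Hud]] := split_multiplied_sum Hsig Hsum.
have [v Hv] : exists v : 'I_q -> vec n, forall j,
    [/\ zero_on_z isz (v j), forall s, zero_on_z isz s -> dot s (v j) <= g j s &
        forall d, zero_on_z isz d -> sigma j * dot d (v j) = dot d (u j)].
  apply: (functional_choice (fun j v => [/\ zero_on_z isz v,
     forall s, zero_on_z isz s -> dot s v <= g j s &
     forall d, zero_on_z isz d -> sigma j * dot d v = dot d (u j)])) => j.
  exact: unscale_subgradient (Hsig j) (Hu j).
exists sigma; split => //; exists v; split; first by move=> j; case: (Hv j).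
move=> d Hd; apply: Rle_trans (Hud d Hd) _; apply: Req_le.
have Hd0 := D_zero_on_z Hd.
transitivity (\big[Rplus/0]_(j < q) (sigma j * dot d (v j))).
  by apply: eq_bigr => j _; case: (Hv j) => _ _ ->.
rewrite /dot; under eq_bigr do rewrite big_distrr.
rewrite exchange_big; apply: eq_bigr => k _; rewrite big_distrl.
by apply: eq_bigr => j _ /=; ring.
Qed.

End Alternative.

(** * Clarke derivatives of Lipschitz functions *)

Lemma Rbar_lubP (E : Rbar -> Prop) : Rbar_is_lub E (Rbar_lub E).
Proof. exact: (proj2_sig (Rbar_ex_lub E)). Qed.

Lemma Rbar_glbP (E : Rbar -> Prop) : Rbar_is_glb E (Rbar_glb E).
Proof. exact: (proj2_sig (Rbar_ex_glb E)). Qed.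

Definition window_sup n (P : vec n -> R -> Prop) (x : vec n) (g : vec n -> R -> R)
    (eps : R) : Rbar :=
  Rbar_lub (fun s => exists y t,
    P y t /\ norm2 (vsub y x) < eps /\ 0 < t < eps /\ s = Rbar.Finite (g y t)).

Section LimsupBounded.
Variables (n : nat) (P : vec n -> R -> Prop) (x : vec n) (g : vec n -> R -> R) (K : R).
Hypothesis g_bounded : forall y t, P y t -> 0 < t -> Rabs (g y t) <= K.
Hypothesis P_center : forall t, 0 < t -> P x t.

Let W := window_sup P x g.
Let M r := exists eps, 0 < eps /\ r = W eps.

Let limsup_ytE : limsup_yt P x g = Rbar_glb M.
Proof. by []. Qed.

Let window_in y t eps : P y t -> norm2 (vsub y x) < eps -> 0 < t < eps ->
  Rbar_le (Rbar.Finite (g y t)) (W eps).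
Proof. by move=> *; apply: (proj1 (Rbar_lubP _)); exists y, t. Qed.

Let window_le eps : Rbar_le (W eps) (Rbar.Finite K).
Proof.
apply: (proj2 (Rbar_lubP _)) => _ [y [t [Hy [_ [Ht ->]]]]] /=.
by have /Rabs_le_between := g_bounded Hy (proj1 Ht); lra.
Qed.

Let window_ge eps : 0 < eps -> Rbar_le (Rbar.Finite (- K)) (W eps).
Proof.
move=> He; have Ht : 0 < eps / 2 < eps by lra.
apply: Rbar_le_trans (window_in (P_center (proj1 Ht)) _ Ht); last first.
  by rewrite norm2_vsub_diag.
by have /Rabs_le_between /= := g_bounded (P_center (proj1 Ht)) (proj1 Ht); lra.
Qed.

Lemma limsup_yt_finite : limsup_yt P x g = Rbar.Finite (real (limsup_yt P x g)).
Proof.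
have Hlo : Rbar_le (Rbar.Finite (- K)) (limsup_yt P x g).
  by rewrite limsup_ytE; apply: (proj2 (Rbar_glbP _)) => _ [eps [He ->]]; apply: window_ge.
have Hhi : Rbar_le (limsup_yt P x g) (Rbar.Finite K).
  rewrite limsup_ytE; apply: Rbar_le_trans (window_le 1).
  by apply: (proj1 (Rbar_glbP _)); exists 1; split => //; lra.
by move: Hlo Hhi; case: (limsup_yt P x g).
Qed.

Let L := real (limsup_yt P x g).

Let limsup_glb : Rbar_is_glb M (Rbar.Finite L).
Proof. by rewrite /L -limsup_yt_finite; apply: Rbar_glbP. Qed.

Lemma limsup_yt_eventually_le eta : 0 < eta ->
  exists eps, 0 < eps /\ forall y t, P y t -> norm2 (vsub y x) < eps -> 0 < t < eps ->
    g y t <= L + eta.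
Proof.
move=> Heta; apply: NNPP => Hn.
(* Otherwise every window supremum is at least [L + eta], above their infimum [L]. *)
have : Rbar_le (Rbar.Finite (L + eta)) (Rbar.Finite L).
  apply: (proj2 limsup_glb) => _ [eps [He ->]].
  apply: Rbar_not_lt_le => Hlt; apply: Hn; exists eps; split => // y t Hy Hyx Ht.
  by have /= := Rbar_le_lt_trans _ _ _ (window_in Hy Hyx Ht) Hlt; lra.
rewrite /=; lra.
Qed.

Lemma limsup_yt_frequently_gt eps eta : 0 < eps -> 0 < eta ->
  exists y t, P y t /\ norm2 (vsub y x) < eps /\ 0 < t < eps /\ L - eta < g y t.
Proof.
move=> He Heta; apply: NNPP => Hn.
have H1 : Rbar_le (W eps) (Rbar.Finite (L - eta)).
  apply: (proj2 (Rbar_lubP _)) => _ [y [t [Hy [Hyx [Ht ->]]]]] /=.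
  by apply: Rnot_lt_le => Hlt; apply: Hn; exists y, t.
have H2 : Rbar_le (Rbar.Finite L) (W eps) by apply: (proj1 limsup_glb); exists eps.
by have /= := Rbar_le_trans _ _ _ H2 H1; lra.
Qed.

End LimsupBounded.

Definition diffq n (h : vec n -> R) (s y : vec n) (t : R) : R :=
  (h (vadd y (vscale t s)) - h y) / t.

Lemma lipschitz_diffq_bounded n (isz : 'I_n -> bool) h s :
  lipschitz_c isz h -> zero_on_z isz s ->
  exists K, forall y t, 0 < t -> Rabs (diffq h s y t) <= K.
Proof.
move=> [L HL] Hs; exists (Rabs L * l1norm s) => y t Ht.
have Hz : same_z isz (vadd y (vscale t s)) y.
  by move=> i Hi; rewrite /vadd /vscale Hs // Rmult_0_r Rplus_0_r.
have := HL _ _ Hz.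
have -> : vsub (vadd y (vscale t s)) y = vscale t s.
  by fext; rewrite /vsub /vadd /vscale; ring.
move=> Hlip; rewrite /diffq Rabs_div; last lra.
rewrite (Rabs_right t); last lra.
apply: (Rmult_le_reg_r t) => //; rewrite /Rdiv Rmult_assoc Rinv_l; last lra.
rewrite Rmult_1_r Rmult_assoc [l1norm s * t]Rmult_comm -l1norm_scale; last lra.
apply: Rle_trans Hlip _; apply: Rle_trans (Rmult_le_compat_r _ _ _ (norm2_ge0 _) (Rle_abs L)) _.
by apply: Rmult_le_compat_l (Rabs_pos L) (norm2_le_l1norm _).
Qed.

Definition clarke_val n (isz : 'I_n -> bool) h (x s : vec n) : R :=
  real (clarke_c isz h x s).

Lemma clarke_jahn_le_clarke n (isz : 'I_n -> bool) (l u : vec n) h (x d : vec n) :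
  Rbar_le (clarke_jahn_c isz l u h x d) (clarke_c isz h x d).
Proof.
apply: (proj2 (Rbar_glbP _)) => _ [eps [He ->]].
apply: Rbar_le_trans (proj1 (Rbar_glbP _) _ _) _; first by exists eps.
by apply: Rbar_lub_subset => _ [y [t [[Hy _] [Hyx [Ht ->]]]]]; exists y, t.
Qed.

Section ClarkeLipschitz.
Variables (n : nat) (isz : 'I_n -> bool) (h : vec n -> R) (x : vec n).
Hypothesis h_lip : lipschitz_c isz h.

Let same_z_refl : forall t : R, 0 < t -> same_z isz x x.
Proof. by []. Qed.

Lemma clarke_c_finite s :
  zero_on_z isz s -> clarke_c isz h x s = Rbar.Finite (clarke_val isz h x s).
Proof.
move=> Hs; have [K HK] := lipschitz_diffq_bounded h_lip Hs.
exact: (@limsup_yt_finite _ _ _ _ K (fun y t _ => HK y t) same_z_refl).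
Qed.

Lemma diffq_le_clarke s eta : zero_on_z isz s -> 0 < eta ->
  exists eps, 0 < eps /\ forall y t, same_z isz x y -> norm2 (vsub y x) < eps ->
    0 < t < eps -> diffq h s y t <= clarke_val isz h x s + eta.
Proof.
move=> Hs; have [K HK] := lipschitz_diffq_bounded h_lip Hs.
exact: (@limsup_yt_eventually_le _ _ _ _ K (fun y t _ => HK y t) same_z_refl).
Qed.

Lemma clarke_lt_diffq s eps eta : zero_on_z isz s -> 0 < eps -> 0 < eta ->
  exists y t, same_z isz x y /\ norm2 (vsub y x) < eps /\ 0 < t < eps /\
    clarke_val isz h x s - eta < diffq h s y t.
Proof.
move=> Hs; have [K HK] := lipschitz_diffq_bounded h_lip Hs.
exact: (@limsup_yt_frequently_gt _ _ _ _ K (fun y t _ => HK y t) same_z_refl).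
Qed.

Lemma clarke_val_scale_le s tau : zero_on_z isz s -> 0 < tau ->
  clarke_val isz h x (vscale tau s) <= tau * clarke_val isz h x s.
Proof.
move=> Hs Htau; apply: (@Rle_of_lt_plus_scaled _ _ (tau + 1)); first lra.
move=> eta Heta; have [eps [Heps Hle]] := diffq_le_clarke Hs Heta.
have Heps' : 0 < Rmin eps (eps / tau) by apply: Rmin_pos => //; apply: Rdiv_lt_0_compat.
have [y [t [Hy [Hyx [Ht Hlt]]]]] := clarke_lt_diffq (zero_on_z_scale tau Hs) Heps' Heta.
have Hmin1 : Rmin eps (eps / tau) <= eps := Rmin_l _ _.
have Ht' : 0 < t * tau < eps.
  have := Rmin_r eps (eps / tau).
  split; first nra.
  by apply: (Rmult_lt_reg_r (/ tau)); [exact: Rinv_0_lt_compat | field_simplify; lra].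
(* A step [t] in direction [tau s] is a step [t * tau] in direction [s]. *)
have Eq : diffq h (vscale tau s) y t = tau * diffq h s y (t * tau).
  rewrite /diffq; have -> : vscale t (vscale tau s) = vscale (t * tau) s.
    by fext; rewrite /vscale; ring.
  by field; lra.
have := Hle y (t * tau) Hy ltac:(lra) Ht'.
move/(Rmult_le_compat_l tau _ _ (Rlt_le _ _ Htau)); rewrite Eq in Hlt; lra.
Qed.

Lemma clarke_val_scale s tau : zero_on_z isz s -> 0 < tau ->
  clarke_val isz h x (vscale tau s) = tau * clarke_val isz h x s.
Proof.
move=> Hs Htau; apply: Rle_antisym; first exact: clarke_val_scale_le.
have := clarke_val_scale_le (zero_on_z_scale tau Hs) (Rinv_0_lt_compat _ Htau).
have -> : vscale (/ tau) (vscale tau s) = s by fext; rewrite /vscale; field; lra.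
move/(Rmult_le_compat_l tau _ _ (Rlt_le _ _ Htau)).
by have -> : tau * (/ tau * clarke_val isz h x (vscale tau s)) =
             clarke_val isz h x (vscale tau s) by field; lra.
Qed.

Lemma clarke_val_add s1 s2 : zero_on_z isz s1 -> zero_on_z isz s2 ->
  clarke_val isz h x (vadd s1 s2) <= clarke_val isz h x s1 + clarke_val isz h x s2.
Proof.
move=> Hs1 Hs2; apply: (@Rle_of_lt_plus_scaled _ _ 3); first lra.
move=> eta Heta.
have [e1 [He1 Hle1]] := diffq_le_clarke Hs1 Heta.
have [e2 [He2 Hle2]] := diffq_le_clarke Hs2 Heta.
pose C := INR n + l1norm s1 + 1.
have HC : 0 < C by have := pos_INR n; have := l1norm_ge0 s1; rewrite /C; lra.
pose e := Rmin e1 (e2 / C).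
have He : 0 < e by apply: Rmin_pos => //; apply: Rdiv_lt_0_compat.
have He1e : e <= e1 := Rmin_l _ _.
have HeC : e * C <= e2.
  have := Rmult_le_compat_r C _ _ (Rlt_le _ _ HC) (Rmin_r e1 (e2 / C)).
  by rewrite -/e; have -> : e2 / C * C = e2 by field; lra.
have [y [t [Hy [Hyx [Ht Hlt]]]]] := clarke_lt_diffq (zero_on_z_add Hs1 Hs2) He Heta.
(* The increment along [s1 + s2] splits into one along [s1] from [y] and one
   along [s2] from the shifted base point [y + t s1], which stays close to [x]. *)
pose y' := vadd y (vscale t s1).
have Hy' : same_z isz x y'.
  by move=> i Hi; rewrite /y' /vadd /vscale Hs1 // Rmult_0_r Rplus_0_r; apply: Hy.
have Hy'x : norm2 (vsub y' x) < e2.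
  apply: Rle_lt_trans (norm2_shift_le x y s1 (Rlt_le _ _ (proj1 Ht))) _.
  have := l1norm_ge0 s1; have := pos_INR n; rewrite /C in HeC; nra.
have Hte2 : t < e2 by have := l1norm_ge0 s1; have := pos_INR n; rewrite /C in HeC; nra.
have Eq : diffq h (vadd s1 s2) y t = diffq h s2 y' t + diffq h s1 y t.
  rewrite /diffq /y'; have -> : vadd y (vscale t (vadd s1 s2)) =
    vadd (vadd y (vscale t s1)) (vscale t s2) by fext; rewrite /vadd /vscale; ring.
  by field; lra.
have := Hle1 y t Hy ltac:(lra) ltac:(lra).
have := Hle2 y' t Hy' Hy'x ltac:(lra).
rewrite Eq in Hlt; lra.
Qed.

End ClarkeLipschitz.

(** * Pareto stationarity *)

Lemma Dc_zero_on_z n (isz : 'I_n -> bool) (l u x d : vec n) :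
  Dc isz l u x d -> zero_on_z isz d.
Proof. by move=> Hd i; case: (Hd i). Qed.

Lemma Dc_zvec n (isz : 'I_n -> bool) (l u x : vec n) : Dc isz l u x (zvec n).
Proof. by move=> i; split => // _; split => _; apply: Rle_refl. Qed.

Lemma Dc_add n (isz : 'I_n -> bool) (l u x d1 d2 : vec n) :
  Dc isz l u x d1 -> Dc isz l u x d2 -> Dc isz l u x (vadd d1 d2).
Proof.
move=> H1 H2 i; have [z1 c1] := H1 i; have [z2 c2] := H2 i; rewrite /vadd.
split => [Hi | Hi]; first by rewrite z1 // z2 // Rplus_0_r.
have [lo1 up1] := c1 Hi; have [lo2 up2] := c2 Hi.
by split => E; [have := lo1 E; have := lo2 E | have := up1 E; have := up2 E]; lra.
Qed.

Lemma Dc_scale n (isz : 'I_n -> bool) (l u x d : vec n) t :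
  0 <= t -> Dc isz l u x d -> Dc isz l u x (vscale t d).
Proof.
move=> Ht H i; have [z c] := H i; rewrite /vscale.
split => [Hi | Hi]; first by rewrite z // Rmult_0_r.
have [lo up] := c Hi.
by split => E; [have := lo E | have := up E]; nra.
Qed.

Unset Implicit Arguments.

Theorem mainTheorem3 (n q : nat) (isz : 'I_n -> bool) (l u : vec n)
  (f : 'I_q -> vec n -> R) (xs : vec n) :
  (0 < n)%nat -> (0 < q)%nat ->
  (exists i, isz i) -> (exists i, ~~ isz i) ->
  (forall i, l i < u i) ->
  (forall i, isz i -> (exists k : Z, l i = IZR k) /\ (exists k : Z, u i = IZR k)) ->
  (forall j, lipschitz_c isz (f j)) ->
  inX l u xs -> inZ isz xs ->
  pareto_clarke_jahn_stationary_c isz l u f xs ->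
  pareto_clarke_stationary_c isz l u f xs.
Proof.
move=> _ Hq _ _ _ _ Hlip _ _ Hstat.
pose g j := clarke_val isz (f j) xs.
have Hfin j s : zero_on_z isz s -> clarke_c isz (f j) xs s = Rbar.Finite (g j s).
  exact: clarke_c_finite.
have Hmax d : Dc isz l u xs d -> exists j, 0 <= g j d.
  move=> Hd; have [j Hj] := Hstat d Hd; exists j.
  by have := Rbar_le_trans _ _ _ Hj (clarke_jahn_le_clarke isz l u (f j) xs d);
    rewrite Hfin //; apply: Dc_zero_on_z Hd.
have [sigma [Hsig Hnz [v [Hv Hd]]]] := sublinear_alternative
  (@Dc_zero_on_z _ _ _ _ _) (Dc_zvec _ _ _ _) (@Dc_add _ _ _ _ _)
  (fun t d Ht => Dc_scale (Rlt_le _ _ Ht))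
  (fun j s w => @clarke_val_add _ _ _ xs (Hlip j) s w)
  (fun j t s Ht Hs => clarke_val_scale xs (Hlip j) Hs Ht)
  Hmax Hq.
exists sigma; split => //; split => //.
exists v, (fun k => \big[Rplus/0]_(j < q) (sigma j * v j k)); split; last by split.
move=> j; have [Hv0 Hv1] := Hv j; split => // s Hs.
by rewrite Hfin //; apply: Hv1.
Qed.
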